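(* Let $\lambda\in\mathbb R$ and $\alpha,\beta\in\mathbb R$ with $\tau\bar\tau:=\alpha^2-\lambda\beta^2\neq 0$. Let $A,B,C:\mathfrak g\to\mathfrak g$ be linear maps with $A^t=-A$ and $C^t=-C$, and let $r'$ be the antisymmetric element of $\mathfrak g_\lambda\otimes\mathfrak g_\lambda$ determined by $(A,B,C)$ as in the context. Then $r=r'+K_\tau$ is a compatible $r$-matrix (i.e. satisfies the classical Yang–Baxter equation $[[r,r]]=0$) if $A,B,C$ satisfy the coupled equations \begin{align*} \tfrac12\,\mathrm{tr}(A^2)-\tfrac{\lambda}{2}\big(\mathrm{tr}(B)^2-\mathrm{tr}(B^2)\big)&=\mu\lambda,\\ \mathrm{tr}(CB)&=\nu,\\ (B-\mathrm{tr}(B)\,\mathrm{id})(B+B^t)+\tfrac12\big(\mathrm{tr}(B)^2-\mathrm{tr}(B^2)\big)\mathrm{id}-CA+\lambda\big(C^2-\tfrac12\mathrm{tr}(C^2)\,\mathrm{id}\big)&=-\mu\,\mathrm{id},\\ -A(B+B^t)+(B^t-\mathrm{tr}(B)\,\mathrm{id})(\lambda C-A)-\mathrm{tr}(AB)\,\mathrm{id}&=-\lambda\nu\,\mathrm{id}. \end{align*}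
   Context: Let $\mathfrak g$ denote either $so(3)$ or $so(2,1)$, with basis $J_0,J_1,J_2$ and metric $\eta=\mathrm{diag}(1,1,1)$ (for $so(3)$) or $\eta=\mathrm{diag}(1,-1,-1)$ (for $so(2,1)$); indices are raised and lowered with $\eta$, summation over repeated indices is implied, $\epsilon_{abc}$ is totally antisymmetric with $\epsilon_{012}=\epsilon^{012}=1$, and $[J_a,J_b]=\epsilon_{abc}J^c$. The inner product on $\mathfrak g$ is $\langle J_a,J_b\rangle=\eta_{ab}$. For a linear map $F:\mathfrak g\to\mathfrak g$, $F^t$ denotes its transpose with respect to $\langle\cdot,\cdot\rangle$ (i.e. $\langle v,Fw\rangle=\langle F^tv,w\rangle$); for $v\in\mathfrak g$, $v^t=\langle v,\cdot\rangle$, so $vu^t$ is the map $X\mapsto\langle u,X\rangle v$; $[u,\cdot]$ is the map $X\mapsto[u,X]$; $\mathrm{id}$ is the identity and $\mathrm{tr}$ the trace. For $\lambda\in\mathbb R$, $\mathfrak g_\lambda$ is the real six-dimensional Lie algebra with basis $J_a,P_a$ ($a=0,1,2$) and brackets $[J_a,J_b]=\epsilon_{abc}J^c$, $[J_a,P_b]=\epsilon_{abc}P^c$, $[P_a,P_b]=\lambda\epsilon_{abc}J^c$. For real $\alpha,\beta$ with $\tau\bar\tau:=\alpha^2-\lambda\beta^2\neq0$ set $K_\tau=\frac{\alpha}{\tau\bar\tau}(J_a\otimes P^a+P_a\otimes J^a)-\frac{\beta}{\tau\bar\tau}(\lambda J_a\otimes J^a+P_a\otimes P^a)$ (the Casimir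 of the invariant form $\alpha t+\beta s$, where $t(J_a,P_b)=\eta_{ab}$, $t(J_a,J_b)=t(P_a,P_b)=0$, $s(J_a,J_b)=\eta_{ab}$, $s(J_a,P_b)=0$, $s(P_a,P_b)=\lambda\eta_{ab}$), and $\mu=\frac{\alpha^2+\lambda\beta^2}{(\tau\bar\tau)^2}$, $\nu=-\frac{2\alpha\beta}{(\tau\bar\tau)^2}$. For $r=\sum_i x_i\otimes y_i\in\mathfrak g_\lambda\otimes\mathfrak g_\lambda$ put $r_{12}=\sum_i x_i\otimes y_i\otimes1$, $r_{13}=\sum_i x_i\otimes1\otimes y_i$, $r_{23}=\sum_i1\otimes x_i\otimes y_i$ and $[[r,r]]=[r_{12},r_{13}]+[r_{12},r_{23}]+[r_{13},r_{23}]$; the classical Yang–Baxter equation is $[[r,r]]=0$. An element $r\in\mathfrak g_\lambda\otimes\mathfrak g_\lambda$ is called a compatible $r$-matrix if $r=r'+K_\tau$ with $r'$ antisymmetric and $[[r,r]]=0$ (equivalently $[[r',r']]=-[[K_\tau,K_\tau]]$). Given linear maps $A,B,C:\mathfrak g\to\mathfrak g$ with $A^t=-A$, $C^t=-C$, write $M_{ba}=\langle J_b,M(J_a)\rangle$ for the matrix entries of $M\in\{A,B,C\}$, and define the antisymmetric element $r'=A_{ba}\,J^a\otimes J^b+B_{ba}\,(P^a\otimes J^b-J^b\otimes P^a)+C_{ba}\,P^a\otimes P^b$. *)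

From HB Require Import structures.
From mathcomp Require Import all_boot all_order all_algebra.
Set Implicit Arguments. Unset Strict Implicit. Unset Printing Implicit Defensive.
Import Order.TTheory GRing.Theory Num.Theory.
Local Open Scope ring_scope.

(* The two real forms: so(3) with eta = diag(1,1,1), so(2,1) with eta = diag(1,-1,-1). *)
Inductive galg := so3 | so21.

Section Defs.
Variable R : realFieldType.

(* diagonal entries eta_{aa} of the metric (lower indices) *)
Definition eta (g : galg) (a : 'I_3) : R :=
  match g with so3 => 1 | so21 => if a == ord0 then 1 else -1 end.
(* eta^{aa} (upper indices), inverse metric *)
Definition etaU (g : galg) (a : 'I_3) : R := (eta g a)^-1.
Definition etaM (g : galg) : 'M[R]_3 := \matrix_(i, j) (if i == j then eta g i else 0).

Definition eps (a b c : 'I_3) : R :=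
  match nat_of_ord a, nat_of_ord b, nat_of_ord c with
  | O, S O, S (S O) | S O, S (S O), O | S (S O), O, S O => 1
  | O, S (S O), S O | S (S O), S O, O | S O, O, S (S O) => -1
  | _, _, _ => 0
  end.

(* Linear maps g -> g are 3x3 matrices M acting on coordinates w.r.t. J_0,J_1,J_2:
   M(J_a) = sum_c M c a J_c.  Composition is *m, identity 1%:M, trace \tr. *)
(* transpose w.r.t. <.,.> : <v, F w> = <F^t v, w> *)
Definition gtr (g : galg) (M : 'M[R]_3) : 'M[R]_3 := invmx (etaM g) *m M^T *m etaM g.
(* matrix entries M_{ba} = <J_b, M(J_a)> *)
Definition ment (g : galg) (M : 'M[R]_3) (b a : 'I_3) : R := (etaM g *m M) b a.

(* Basis of g_lambda: (false, a) is J_a, (true, a) is P_a. *)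
Definition bidx := (bool * 'I_3)%type.

(* structure constants: coefficient of basis element z in [x, y] in g_lambda *)
Definition sconst (g : galg) (lam : R) (x y z : bidx) : R :=
  let: (px, a) := x in let: (py, b) := y in let: (pz, c) := z in
  match px, py, pz with
  | false, false, false => eps a b c * etaU g c        (* [J_a,J_b] = eps_abc J^c *)
  | false, true, true | true, false, true => eps a b c * etaU g c
                                                       (* [J_a,P_b] = eps_abc P^c *)
  | true, true, false => lam * eps a b c * etaU g c    (* [P_a,P_b] = lam eps_abc J^c *)
  | _, _, _ => 0
  end.

(* elements of g_lambda (x) g_lambda as coefficient arrays r x y (coefficient of e_x (x) e_y);
   the classical Yang-Baxter expression [[r,r]] as a coefficient array on three slots *)
Definition cybe (g : galg) (lam : R) (r : bidx -> bidx -> R) (a b c : bidx) : R :=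
  (\sum_(x : bidx) \sum_(y : bidx) r x b * r y c * sconst g lam x y a)   (* [r12,r13] *)
+ (\sum_(x : bidx) \sum_(y : bidx) r a x * r y c * sconst g lam x y b)   (* [r12,r23] *)
+ (\sum_(x : bidx) \sum_(y : bidx) r a x * r b y * sconst g lam x y c).  (* [r13,r23] *)

Definition Ktau (g : galg) (lam al be : R) (x y : bidx) : R :=
  let tt := al ^+ 2 - lam * be ^+ 2 in
  let: (px, a) := x in let: (py, b) := y in
  if a == b then
    match px, py with
    | false, true | true, false => al / tt * etaU g a
    | false, false => - (be / tt) * lam * etaU g a
    | true, true => - (be / tt) * etaU g a
    end
  else 0.

(* r' = A_{ba} J^a(x)J^b + B_{ba}(P^a(x)J^b - J^b(x)P^a) + C_{ba} P^a(x)P^b *)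
Definition rprime (g : galg) (A B C : 'M[R]_3) (x y : bidx) : R :=
  let: (px, a) := x in let: (py, b) := y in
  match px, py with
  | false, false => ment g A b a * etaU g a * etaU g b
  | true, false => ment g B b a * etaU g a * etaU g b
  | false, true => - (ment g B a b * etaU g b * etaU g a)
  | true, true => ment g C b a * etaU g a * etaU g b
  end.

Definition mu (lam al be : R) : R :=
  (al ^+ 2 + lam * be ^+ 2) / (al ^+ 2 - lam * be ^+ 2) ^+ 2.
Definition nu (lam al be : R) : R :=
  - (2 * al * be) / (al ^+ 2 - lam * be ^+ 2) ^+ 2.

End Defs.

(* Put t := 1 / (tau taubar).  Then K_tau, mu and nu are polynomial in t, and so is
   every coordinate of [[r,r]].  Writing the skew-adjoint maps A and C as ad_a and ad_c
   turns all coordinates into independent variables.  The coordinates of [[r,r]] are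
   alternating in the three slots: the JJJ and PPP ones are -eps_abc times the residuals
   of the two scalar equations, while the mixed JJP and JPP ones are eps-contractions
   of the residual matrices of the fourth and the third equation.  Hence the four
   equations force [[r,r]] = 0; each coordinate formula is a polynomial identity,
   checked by normalization once the brackets of g_lambda are expanded. *)

From Pilot Require Import Defs.
From HB Require Import structures.
From mathcomp Require Import all_boot all_order all_algebra ring lra.
Import Order.TTheory GRing.Theory Num.Theory.
Local Open Scope ring_scope.
Set Implicit Arguments. Unset Strict Implicit. Unset Printing Implicit Defensive.

(* Literal ordinals, so that [nat_of_ord] and [==] on them reduce by computation. *)
Local Notation o0 := (@Ordinal 3 0 isT).
Local Notation o1 := (@Ordinal 3 1 isT).
Local Notation o2 := (@Ordinal 3 2 isT).

Lemma ord3P (i : 'I_3) : [\/ i = o0, i = o1 | i = o2].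
Proof.
by case: i => -[|[|[|//]]] ?; [constructor 1|constructor 2|constructor 3]; apply: val_inj.
Qed.

Lemma sum_ord3 (V : nmodType) (F : 'I_3 -> V) : \sum_(i : 'I_3) F i = F o0 + F o1 + F o2.
Proof.
by rewrite !big_ord_recr big_ord0 /= add0r; congr (F _ + F _ + F _); apply: val_inj.
Qed.

Lemma mxtrace3 (R : ringType) (M : 'M[R]_3) : \tr M = M o0 o0 + M o1 o1 + M o2 o2.
Proof. by rewrite /mxtrace sum_ord3. Qed.

Lemma sum_bidx (V : nmodType) (F : bidx -> V) :
  \sum_(x : bidx) F x = \sum_(i : 'I_3) F (false, i) + \sum_(i : 'I_3) F (true, i).
Proof.
rewrite addrC -(big_bool _ (fun b => \sum_(i : 'I_3) F (b, i))) pair_big /=.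
by apply: eq_bigr => -[].
Qed.

Definition succ3 (i : 'I_3) : 'I_3 :=
  match nat_of_ord i with 0%N => o1 | 1%N => o2 | _ => o0 end.

Lemma sum_eps (R : realFieldType) (F : 'I_3 -> 'I_3 -> R) c :
  \sum_i \sum_j eps R i j c * F i j =
  F (succ3 c) (succ3 (succ3 c)) - F (succ3 (succ3 c)) (succ3 c).
Proof. by rewrite !sum_ord3 /eps; case: (ord3P c) => -> /=; ring. Qed.

Section Metric.
Variables (R : realFieldType) (g : galg).
Local Notation eta := (Defs.eta R g).

Lemma eta_sqr a : eta a * eta a = 1.
Proof. by case: g => /=; [|case: (a == ord0)]; rewrite ?mulrNN mulr1. Qed.

Lemma etaU_eta a : etaU R g a = eta a.
Proof. by rewrite /etaU; case: g => /=; [|case: (a == ord0)]; rewrite ?invr1 ?invrN1. Qed.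

Lemma etaM_diag : etaM R g = diag_mx (\row_i eta i).
Proof. by apply/matrixP => i j; rewrite !mxE eq_sym mulrb. Qed.

Lemma invmx_etaM : invmx (etaM R g) = etaM R g.
Proof.
have etaM_sqr : etaM R g *m etaM R g = 1%:M.
  by rewrite etaM_diag mul_diag_mx; apply/matrixP => i j; rewrite !mxE mulrnAr eta_sqr.
have [etaM_unit _] := mulmx1_unit etaM_sqr.
by rewrite -[LHS]mulmx1 -etaM_sqr mulKmx.
Qed.

Lemma gtrE (M : 'M[R]_3) : gtr g M = \matrix_(i, j) (eta i * M j i * eta j).
Proof.
rewrite /gtr invmx_etaM etaM_diag mul_diag_mx mul_mx_diag.
by apply/matrixP => i j; rewrite !mxE.
Qed.

Lemma mentE (M : 'M[R]_3) b a : ment g M b a = eta b * M b a.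
Proof. by rewrite /ment etaM_diag mul_diag_mx !mxE. Qed.

Lemma skew_offdiag (M : 'M[R]_3) :
  gtr g M = - M -> forall i j, M j i = - (eta i * eta j * M i j).
Proof.
move=> /matrixP hM i j; rewrite -mulrN; move: (hM i j); rewrite gtrE !mxE => <-.
have -> : eta i * eta j * (eta i * M j i * eta j) = eta i * eta i * (eta j * eta j) * M j i
  by ring.
by rewrite !eta_sqr !mul1r.
Qed.

Lemma skew_diag (M : 'M[R]_3) : gtr g M = - M -> forall i, M i i = 0.
Proof. by move=> hM i; have := skew_offdiag hM i i; rewrite eta_sqr mul1r; lra. Qed.

(* [admx s] is the matrix of X |-> [s_0 J_0 + s_1 J_1 + s_2 J_2, X]; its entries are
   written out so that they evaluate by computation at concrete indices. *)
Definition ad_coef (s : 'I_3 -> R) (c j : 'I_3) : R :=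
  eta c * match nat_of_ord c, nat_of_ord j with
    | 0%N, 1%N => - s o2 | 0%N, 2%N => s o1 | 1%N, 0%N => s o2
    | 1%N, 2%N => - s o0 | 2%N, 0%N => - s o1 | 2%N, 1%N => s o0 | _, _ => 0 end.

Definition admx (s : 'I_3 -> R) : 'M[R]_3 := \matrix_(c, j) ad_coef s c j.

Lemma skew_admx (M : 'M[R]_3) : gtr g M = - M -> exists s, M = admx s.
Proof.
move=> hM; exists (fun k => \sum_j \sum_c eps R k j c * eta c * M c j / 2).
apply/matrixP => i j; rewrite mxE /ad_coef /= !sum_ord3 /eps.
have E10 := skew_offdiag hM o0 o1; have E20 := skew_offdiag hM o0 o2.
have E21 := skew_offdiag hM o1 o2; have D := skew_diag hM.
case: (ord3P i) => ->; case: (ord3P j) => ->; rewrite E10 E20 E21 !D /=;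
  clear hM E10 E20 E21 D; case: g => /=; by field.
Qed.

Definition eps_contr (M : 'M[R]_3) (a b c : 'I_3) : R :=
  \sum_d eps R a b d * eta d * eta c * M d c.

End Metric.

(* K_tau with 1 / (tau taubar) replaced by a free scale t: [Ktau] is [casimir] at
   t = (tau taubar)^-1 by conversion. *)
Definition casimir (R : realFieldType) (g : galg) (lam al be t : R) (x y : bidx) : R :=
  let: (px, a) := x in let: (py, b) := y in
  if a == b then
    match px, py with
    | false, true | true, false => al * t * etaU R g a
    | false, false => - (be * t) * lam * etaU R g a
    | true, true => - (be * t) * etaU R g a
    end
  else 0.

Section Residuals.
Variables (R : realFieldType) (g : galg) (lam mu nu : R) (A B C : 'M[R]_3).

Definition residual1 : R :=
  \tr (A *m A) / 2 - lam / 2 * (\tr B ^+ 2 - \tr (B *m B)) - mu * lam.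

Definition residual2 : R := \tr (C *m B) - nu.

Definition residual3 : 'M[R]_3 :=
  (B - (\tr B)%:M) *m (B + gtr g B) + ((\tr B ^+ 2 - \tr (B *m B)) / 2)%:M - C *m A
  + lam *: (C *m C - (\tr (C *m C) / 2)%:M) + mu%:M.

Definition residual4 : 'M[R]_3 :=
  - (A *m (B + gtr g B)) + (gtr g B - (\tr B)%:M) *m (lam *: C - A) - (\tr (A *m B))%:M
  + (lam * nu)%:M.

End Residuals.

Lemma sum_sconst_J (R : realFieldType) (g : galg) (lam : R) (F : bidx -> bidx -> R) c :
  \sum_x \sum_y F x y * sconst g lam x y (false, c) =
  let c' := succ3 c in let c'' := succ3 c' in
  Defs.eta R g c * (F (false, c') (false, c'') - F (false, c'') (false, c')
                    + lam * (F (true, c') (true, c'') - F (true, c'') (true, c'))).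
Proof.
transitivity (\sum_i \sum_j eps R i j c *
                (Defs.eta R g c * (F (false, i) (false, j) + lam * F (true, i) (true, j)))).
  rewrite sum_bidx -big_split; apply: eq_bigr => i _.
  by rewrite !sum_bidx /sconst -!big_split; apply: eq_bigr => j _; rewrite /= etaU_eta; ring.
by rewrite sum_eps /=; ring.
Qed.

Lemma sum_sconst_P (R : realFieldType) (g : galg) (lam : R) (F : bidx -> bidx -> R) c :
  \sum_x \sum_y F x y * sconst g lam x y (true, c) =
  let c' := succ3 c in let c'' := succ3 c' in
  Defs.eta R g c * (F (false, c') (true, c'') - F (false, c'') (true, c')
                    + (F (true, c') (false, c'') - F (true, c'') (false, c'))).
Proof.
transitivity (\sum_i \sum_j eps R i j c *
                (Defs.eta R g c * (F (false, i) (true, j) + F (true, i) (false, j)))).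
  rewrite sum_bidx -big_split; apply: eq_bigr => i _.
  by rewrite !sum_bidx /sconst -!big_split; apply: eq_bigr => j _; rewrite /= etaU_eta; ring.
by rewrite sum_eps /=; ring.
Qed.

Lemma eq_cybe (R : realFieldType) (g : galg) (lam : R) (r r' : bidx -> bidx -> R) :
  (forall u v, r u v = r' u v) -> forall x y z, cybe g lam r x y z = cybe g lam r' x y z.
Proof.
move=> E x y z; rewrite /cybe; congr (_ + _ + _);
  by apply: eq_bigr => u _; apply: eq_bigr => v _; rewrite !E.
Qed.

Section Components.
Variables (R : realFieldType) (g : galg) (lam al be t : R) (sA sC : 'I_3 -> R) (B : 'M[R]_3).
Local Notation eta := (Defs.eta R g).
Local Notation A := (admx g sA).
Local Notation C := (admx g sC).
Local Notation mu := ((al ^+ 2 + lam * be ^+ 2) * t ^+ 2).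
Local Notation nu := (- (2 * al * be) * t ^+ 2).

Definition rcoef (x y : bidx) : R :=
  let: (px, a) := x in let: (py, b) := y in
  match px, py with
  | false, false => eta a * ad_coef g sA b a - (a == b)%:R * be * t * lam * eta a
  | true, false => eta a * B b a + (a == b)%:R * al * t * eta a
  | false, true => - (eta b * B a b) + (a == b)%:R * al * t * eta a
  | true, true => eta a * ad_coef g sC b a - (a == b)%:R * be * t * eta a
  end.

Lemma eta_cancel x a b : eta b * x * eta a * eta b = eta a * x.
Proof. by rewrite mulrC !mulrA eta_sqr mul1r mulrC. Qed.

Lemma rcoefE u v : rprime g A B C u v + casimir g lam al be t u v = rcoef u v.
Proof.
case: u v => [[] a] [[] b]; rewrite /rprime /casimir !mentE !etaU_eta ?mxE !eta_cancel /=;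
  have [<-|nab] := eqVneq a b; rewrite ?eqxx ?(negbTE nab) /=; ring.
Qed.

Local Notation r := (fun u v => rprime g A B C u v + casimir g lam al be t u v).

(* The residuals are expanded while the goal is still small; only then is [[r,r]]
   expanded and are all indices enumerated. *)
Ltac expand_components a b c :=
  rewrite /eps_contr /residual1 /residual2 /residual3 /residual4 ?gtrE ?mxtrace3;
  rewrite !mxE ?sum_ord3 ?mxE ?sum_ord3 ?mxE ?sum_ord3 ?mxE;
  rewrite (eq_cybe _ _ rcoefE) /cybe ?sum_sconst_J ?sum_sconst_P;
  rewrite /rcoef /ad_coef /eps /=;
  case: g; case: (ord3P a) => ->; case: (ord3P b) => ->; case: (ord3P c) => ->; rewrite /=.

Lemma cybe_JJJ a b c :
  cybe g lam r (false, a) (false, b) (false, c) = - eps R a b c * residual1 lam mu A B.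
Proof. expand_components a b c; by field. Qed.

Lemma cybe_PPP a b c :
  cybe g lam r (true, a) (true, b) (true, c) = - eps R a b c * residual2 nu B C.
Proof. expand_components a b c; ring. Qed.

Local Notation E3 := (eps_contr g (residual3 g lam mu A B C)).
Local Notation E4 := (eps_contr g (residual4 g lam nu A B C)).

Lemma cybe_JJP a b c :
  [/\ cybe g lam r (false, a) (false, b) (true, c) = E4 a b c,
      cybe g lam r (false, a) (true, c) (false, b) = - E4 a b c &
      cybe g lam r (true, c) (false, a) (false, b) = E4 a b c].
Proof. split; expand_components a b c; ring. Qed.

Lemma cybe_JPP a b c :
  [/\ cybe g lam r (false, c) (true, a) (true, b) = E3 a b c,
      cybe g lam r (true, a) (false, c) (true, b) = - E3 a b c &
      cybe g lam r (true, a) (true, b) (false, c) = E3 a b c].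
Proof. split; expand_components a b c; by field. Qed.

Hypotheses (h1 : residual1 lam mu A B = 0) (h2 : residual2 nu B C = 0).
Hypotheses (h3 : residual3 g lam mu A B C = 0) (h4 : residual4 g lam nu A B C = 0).

Lemma cybe_eq0 x y z : cybe g lam r x y z = 0.
Proof.
have contr0 a b c : eps_contr g 0 a b c = 0.
  by rewrite /eps_contr big1 // => d _; rewrite mxE mulr0.
case: x y z => [[] a] [[] b] [[] c].
- by rewrite cybe_PPP h2 mulr0.
- by have [_ _ ->] := cybe_JPP a b c; rewrite h3 contr0.
- by have [_ -> _] := cybe_JPP a c b; rewrite h3 contr0 oppr0.
- by have [_ _ ->] := cybe_JJP b c a; rewrite h4 contr0.
- by have [-> _ _] := cybe_JPP b c a; rewrite h3 contr0.
- by have [_ -> _] := cybe_JJP a c b; rewrite h4 contr0 oppr0.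
- by have [-> _ _] := cybe_JJP a b c; rewrite h4 contr0.
- by rewrite cybe_JJJ h1 mulr0.
Qed.

End Components.

Theorem mainTheorem1 (R : realFieldType) (g : galg) (lam al be : R)
  (A B C : 'M[R]_3)
  (htt : al ^+ 2 - lam * be ^+ 2 != 0)
  (hA : gtr g A = - A) (hC : gtr g C = - C)
  (e1 : \tr (A *m A) / 2 - lam / 2 * (\tr B ^+ 2 - \tr (B *m B)) = mu lam al be * lam)
  (e2 : \tr (C *m B) = nu lam al be)
  (e3 : (B - (\tr B)%:M) *m (B + gtr g B)
        + ((\tr B ^+ 2 - \tr (B *m B)) / 2)%:M - C *m A
        + lam *: (C *m C - (\tr (C *m C) / 2)%:M)
        = - (mu lam al be)%:M)
  (e4 : - (A *m (B + gtr g B)) + (gtr g B - (\tr B)%:M) *m (lam *: C - A)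
        - (\tr (A *m B))%:M
        = - (lam * nu lam al be)%:M) :
  forall x y z : bidx,
    cybe g lam (fun u v => rprime g A B C u v + Ktau g lam al be u v) x y z = 0.
Proof.
(* [htt] is not needed: the identities are polynomial in t, and at tau taubar = 0
   Rocq's junk value 0^-1 = 0 just gives another instance. *)
move=> x y z.
have [sA eA] := skew_admx hA; have [sC eC] := skew_admx hC; subst A C.
pose t := (al ^+ 2 - lam * be ^+ 2)^-1.
have Emu : mu lam al be = (al ^+ 2 + lam * be ^+ 2) * t ^+ 2 by rewrite /mu /t exprVn.
have Enu : nu lam al be = - (2 * al * be) * t ^+ 2 by rewrite /nu /t exprVn.
change (cybe g lam (fun u v => rprime g (admx g sA) B (admx g sC) u v
                               + casimir g lam al be t u v) x y z = 0).
apply: cybe_eq0.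
- by rewrite /residual1 e1 Emu subrr.
- by rewrite /residual2 e2 Enu subrr.
- by rewrite /residual3 e3 Emu addNr.
- by rewrite /residual4 e4 Enu addNr.
Qed.
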